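(* Let $\Omega=\{1,\dots,m\}^{\mathbb{N}}$, let $\mathcal{M}$ be the set of Borel probabilities on $\Omega$ with the Monge–Kantorovich metric $d_{MK}$, let $(\eta_j)_{j\in\mathbb{N}}$ be a sequence in $\mathcal{M}$, and let $R:\Omega\times\Omega\to\Omega$ be a continuous convolution kernel which is $s$-Lipschitz contractive in the second variable ($0\le s<1$ and $d_\Omega(R(x,y),R(x,y'))\le s\,d_\Omega(y,y')$ for all $x,y,y'$). Define $\phi_j:\mathcal{M}\to\mathcal{M}$ by $\phi_j(\mu)=\eta_j*\mu$, where $*$ is the convolution associated to $R$. Then the countable iterated function system $(\mathcal{M},\phi_j)_{j\in\mathbb{N}}$ is uniformly contractive with Lipschitz constant $s$, i.e. $d_{MK}(\phi_j(\mu),\phi_j(\mu'))\le s\,d_{MK}(\mu,\mu')$ for all $j$ and all $\mu,\mu'\in\mathcal{M}$.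
   Context: $d_\Omega(\alpha,\beta)=2^{-k}$ with $k=\min\{i:\alpha_i\neq\beta_i\}$ (and $0$ if $\alpha=\beta$); $d_{MK}(\mu,\nu)=\sup\{\int f\,d\mu-\int f\,d\nu : f \text{ 1-Lipschitz}\}$. The convolution associated to $R$ is $\int_\Omega f\,d(\nu*\mu)=\int\int f(R(x,y))\,d\nu(x)\,d\mu(y)$ for all continuous $f$. *)

From HB Require Import structures.
From mathcomp Require Import all_boot all_order all_algebra.
From mathcomp Require Import all_classical all_reals all_analysis.
Set Implicit Arguments. Unset Strict Implicit. Unset Printing Implicit Defensive.
Import Order.TTheory GRing.Theory Num.Theory.
Import numFieldNormedType.Exports.
Local Open Scope classical_set_scope.
Local Open Scope ring_scope.

(* The symbol space Omega = {1,...,m}^N, with m = n.+1 (alphabet 'I_n.+1). *)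
Definition Sym (n : nat) := 'I_n.+1.
HB.instance Definition _ (n : nat) := Finite.on (Sym n).
HB.instance Definition _ (n : nat) := isPointed.Build (Sym n) ord0.
Definition Omega (n : nat) := nat -> Sym n.
HB.instance Definition _ (n : nat) := Pointed.on (Omega n).

Definition dOmega (R : realType) (n : nat) (a b : Omega n) : R :=
  match pselect (exists i, a i != b i) with
  | left H => (2 ^-1) ^+ (ex_minn H)
  | right _ => 0
  end.

Definition dOpen (R : realType) (n : nat) : set (set (Omega n)) :=
  [set U : set (Omega n) | forall x : Omega n, U x -> exists2 e : R, 0 < e &
           forall y : Omega n, dOmega R x y < e -> U y].

Definition OmegaB (R : realType) (n : nat) := g_sigma_algebraType (@dOpen R n).

Definition lip1 (R : realType) (n : nat) (f : Omega n -> R) : Prop :=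
  forall x y, `|f x - f y| <= dOmega R x y.

Definition dcontinuous (R : realType) (n : nat) (f : Omega n -> R) : Prop :=
  forall x (e : R), 0 < e -> exists2 d : R, 0 < d &
    forall y, dOmega R x y < d -> `|f x - f y| < e.

Definition dcontinuous2 (R : realType) (n : nat)
    (K : Omega n -> Omega n -> Omega n) : Prop :=
  forall x y (e : R), 0 < e -> exists2 d : R, 0 < d &
    forall x' y', dOmega R x x' < d -> dOmega R y y' < d ->
      dOmega R (K x y) (K x' y') < e.

Definition dMK (R : realType) (n : nat)
    (mu nu : probability (OmegaB R n) R) : R :=
  sup [set (\int[mu]_(x in setT) f x - \int[nu]_(x in setT) f x)%R
      | f in [set f : Omega n -> R | lip1 f]].

(* rho = nu * mu is the convolution associated to K:
   int f d rho = int int f(K(x,y)) dnu(x) dmu(y) for all continuous f. *)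
Definition is_convolution (R : realType) (n : nat)
    (K : Omega n -> Omega n -> Omega n)
    (nu mu rho : probability (OmegaB R n) R) : Prop :=
  forall f : Omega n -> R, dcontinuous f ->
    (\int[rho]_x (f x)%:E =
     \int[mu]_y (\int[nu]_x (f (K x y))%:E))%E.

From HB Require Import structures.
From mathcomp Require Import all_boot all_order all_algebra.
From mathcomp Require Import all_classical all_reals all_analysis.
From mathcomp Require Import lra.
Import Order.TTheory GRing.Theory Num.Theory.
Import numFieldNormedType.Exports.
Local Open Scope classical_set_scope.
Local Open Scope ring_scope.

(* Unfolding the convolution, the integral of a 1-Lipschitz test function f
   against eta * mu is the integral against mu of
   g(y) = \int f(K(x, y)) d eta(x).  Contractivity of K in its second variable
   makes g s-Lipschitz, and g / s is then a test function for d_MK(mu, mu'). *)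

Section ProbabilityRintegral.
Context {d} {T : measurableType d} {R : realType} (P : probability T R).

Lemma probability_Rintegral_cst (r : R) : \int[P]_(x in [set: T]) r = r.
Proof.
by rewrite Rintegral_cst //; have := probability_setT P => /= ->; rewrite mulr1.
Qed.

Lemma bounded_integrable (h : T -> R) :
  measurable_fun [set: T] h -> (exists M, forall x, `|h x| <= M) ->
  P.-integrable [set: T] (EFin \o h).
Proof.
move=> mh [M hM]; apply: measurable_bounded_integrable => //.
  by have := probability_setT P => /= ->; rewrite ltry.
rewrite /bounded_near; near=> M0; rewrite /globally /= => x _.
apply: le_trans (hM x) _.
near: M0; exact: nbhs_pinfty_ge (num_real M).
Unshelve. all: end_near. Qed.

Lemma normr_RintegralB_le (h1 h2 : T -> R) (r : R) :
  P.-integrable [set: T] (EFin \o h1) -> P.-integrable [set: T] (EFin \o h2) ->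
  (forall x, `|h1 x - h2 x| <= r) ->
  `|\int[P]_(x in [set: T]) h1 x - \int[P]_(x in [set: T]) h2 x| <= r.
Proof.
move=> i1 i2 h12; rewrite -RintegralB //.
have iB : P.-integrable [set: T] (EFin \o (h1 \- h2))
  by rewrite compreBr //; exact: integrableB.
apply: le_trans (le_normr_Rintegral _ iB) _ => //.
rewrite -[leRHS](probability_Rintegral_cst r); apply: le_Rintegral => //.
- exact: integrable_norm iB.
- by apply: bounded_integrable => //; exists `|r|.
- by move=> x _; exact: h12.
Qed.

End ProbabilityRintegral.

Definition dlipschitz {R : realType} {n : nat} (c : R) (f : Omega n -> R) :=
  forall x y, `|f x - f y| <= c * dOmega R x y.

Section OmegaMetric.
Context (R : realType) {n : nat}.
Implicit Types a b : Omega n.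

Lemma dOmega_ge0 a b : 0 <= dOmega R a b.
Proof. by rewrite /dOmega; case: pselect => // H; exact: exprn_ge0. Qed.

Lemma dOmega_le1 a b : dOmega R a b <= 1.
Proof.
rewrite /dOmega; case: pselect => // H; apply: exprn_ile1 => //.
by rewrite invf_le1 // ler1n.
Qed.

Lemma dOmega_xx a : dOmega R a a = 0.
Proof.
by rewrite /dOmega; case: pselect => // H; exfalso; case: H => i; rewrite eqxx.
Qed.

End OmegaMetric.

Section Lipschitz.
Context {R : realType} {n : nat}.
Implicit Types (c : R) (f : Omega n -> R).

Lemma lip1_dlipschitz f : lip1 f -> dlipschitz 1 f.
Proof. by move=> lf x y; rewrite mul1r. Qed.

Lemma dlipschitz_dcontinuous c f : 0 <= c -> dlipschitz c f -> dcontinuous f.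
Proof.
move=> c0 lf x e e0; exists (e / (c + 1)); first by rewrite divr_gt0 // ltr_wpDl.
move=> y dxy; apply: le_lt_trans (lf x y) _.
apply: (@le_lt_trans _ _ (c * (e / (c + 1)))); first exact/ler_wpM2l/ltW.
by rewrite mulrA ltr_pdivrMr ?ltr_wpDl // mulrDr mulr1 mulrC ltrDl.
Qed.

Lemma dlipschitz_bounded c f : 0 <= c -> dlipschitz c f ->
  exists M, forall x, `|f x| <= M.
Proof.
move=> c0 lf; exists (`|f point| + c) => x.
have cd : c * dOmega R x point <= c by rewrite ler_piMr ?dOmega_le1.
have := ler_normD (f x - f point) (f point); rewrite subrK.
have := lf x point; lra.
Qed.

Lemma dcontinuous_measurable f : dcontinuous f ->
  measurable_fun [set: OmegaB R n] f.
Proof.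
move=> cf; apply: (measurability _ (measurable_realfun.RGenOInfty.measurableE R)).
move=> /= _ [_ [r ->] <-]; rewrite setTI.
apply: sub_sigma_algebra => y /=; rewrite in_itv /= andbT => ry.
have [e e0 He] := cf y (f y - r) ltac:(by rewrite subr_gt0).
exists e => // z /He; rewrite in_itv /= andbT.
have := ler_norm (f y - f z); lra.
Qed.

Lemma dlipschitz_integrable (P : probability (OmegaB R n) R) c f :
  0 <= c -> dlipschitz c f -> P.-integrable [set: OmegaB R n] (EFin \o f).
Proof.
move=> c0 lf; apply: bounded_integrable; last exact: dlipschitz_bounded lf.
apply: dcontinuous_measurable.
exact: dlipschitz_dcontinuous c0 lf.
Qed.

End Lipschitz.

Section MongeKantorovich.
Context {R : realType} {n : nat}.
Implicit Types (c : R) (f g : Omega n -> R) (mu nu : probability (OmegaB R n) R).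

Lemma normr_Rintegral_dlipschitz_sub nu c f y : 0 <= c -> dlipschitz c f ->
  `|\int[nu]_(x in [set: OmegaB R n]) f x - f y| <= c.
Proof.
move=> c0 lf; rewrite -[X in _ - X](probability_Rintegral_cst nu (f y)).
apply: normr_RintegralB_le; first exact: dlipschitz_integrable lf.
  by apply: bounded_integrable => //; exists `|f y|.
by move=> x; apply: le_trans (lf x y) _; rewrite ler_piMr ?dOmega_le1.
Qed.

Lemma dMK_has_sup mu nu :
  has_sup [set (\int[mu]_(x in setT) f x - \int[nu]_(x in setT) f x)%R
          | f in [set f : Omega n -> R | lip1 f]].
Proof.
split.
  by exists (\int[mu]_(x in setT) 0 - \int[nu]_(x in setT) 0), (fun=> 0) => //
    x y; rewrite subrr normr0 dOmega_ge0.
exists 2 => _ [f /lip1_dlipschitz lf <-].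
have := normr_Rintegral_dlipschitz_sub mu _ _ point ler01 lf.
have := normr_Rintegral_dlipschitz_sub nu _ _ point ler01 lf.
rewrite !ler_norml; lra.
Qed.

Lemma RintegralB_le_dMK mu nu c g : 0 <= c -> dlipschitz c g ->
  \int[mu]_(x in setT) g x - \int[nu]_(x in setT) g x <= c * dMK mu nu.
Proof.
rewrite le_eqVlt => /predU1P[<- lg|c0 lg].
  have int_g (P : probability (OmegaB R n) R) : \int[P]_(x in setT) g x = g point.
    by apply/eqP; rewrite -subr_eq0 -normr_le0 normr_Rintegral_dlipschitz_sub.
  by rewrite !int_g subrr mul0r.
have lcg : lip1 (fun y => c^-1 * g y).
  by move=> x y; rewrite -mulrBr normrM gtr0_norm ?invr_gt0 // ler_pdivrMl.
have := sup_upper_bound (dMK_has_sup mu nu) (ex_intro2 _ _ _ lcg erefl).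
rewrite /= !RintegralZl -?mulrBr ?ler_pdivrMl //.
all: exact: dlipschitz_integrable (ltW c0) lg.
Qed.

End MongeKantorovich.

Section Convolution.
Context {R : realType} {n : nat} {K : Omega n -> Omega n -> Omega n}.
Hypothesis K_cont : dcontinuous2 R K.
Context {nu : probability (OmegaB R n) R} {f : Omega n -> R}.
Hypothesis lip1f : lip1 f.

Lemma lip1_comp_dcontinuous y : dcontinuous (fun x => f (K x y)).
Proof.
move=> x e e0; have [r r0 Kr] := K_cont x y e e0.
exists r => // x' xx'; apply: le_lt_trans (lip1f _ _) _.
by apply: Kr; rewrite ?dOmega_xx.
Qed.

Lemma lip1_comp_integrable y :
  nu.-integrable [set: OmegaB R n] (EFin \o (fun x => f (K x y))).
Proof.
have [M fM] := dlipschitz_bounded _ _ ler01 (lip1_dlipschitz _ lip1f).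
apply: bounded_integrable; last by exists M.
exact: dcontinuous_measurable (lip1_comp_dcontinuous y).
Qed.

Lemma convolution_dlipschitz s :
  (forall x y y', dOmega R (K x y) (K x y') <= s * dOmega R y y') ->
  dlipschitz s (fun y => \int[nu]_(x in setT) f (K x y)).
Proof.
move=> K_contr y y'; apply: normr_RintegralB_le => [||x].
- exact: lip1_comp_integrable.
- exact: lip1_comp_integrable.
- exact: le_trans (lip1f _ _) (K_contr x y y').
Qed.

Lemma is_convolution_Rintegral mu rho : is_convolution K nu mu rho ->
  \int[rho]_(x in setT) f x =
  \int[mu]_(y in setT) \int[nu]_(x in setT) f (K x y).
Proof.
move=> conv; rewrite /Rintegral conv; last first.
  exact: dlipschitz_dcontinuous ler01 (lip1_dlipschitz _ lip1f).
congr fine; apply: eq_integral => y _.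
by rewrite fineK //; exact: integrable_fin_num (lip1_comp_integrable y).
Qed.

End Convolution.

Theorem corollary3p2 (R : realType) (n : nat)
  (eta : nat -> probability (OmegaB R n) R)
  (K : Omega n -> Omega n -> Omega n) (s : R)
  (phi : nat -> probability (OmegaB R n) R -> probability (OmegaB R n) R) :
  dcontinuous2 R K ->
  0 <= s -> s < 1 ->
  (forall x y y', dOmega R (K x y) (K x y') <= s * dOmega R y y') ->
  (forall j mu, is_convolution K (eta j) mu (phi j mu)) ->
  forall j (mu mu' : probability (OmegaB R n) R),
    dMK (phi j mu) (phi j mu') <= s * dMK mu mu'.
Proof.
move=> K_cont s0 _ K_contr conv j mu mu'.
apply: ge_sup; first exact: (dMK_has_sup _ _).1.
move=> _ [f lip1f <-].
rewrite !(is_convolution_Rintegral K_cont lip1f _ _ (conv j _)).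
exact: RintegralB_le_dMK s0 (convolution_dlipschitz K_cont lip1f _ K_contr).
Qed.
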